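(* The fixed point set $\mathrm{Fix}\,R=\{x\in[0,1]:R(x)=x\}$ is an uncountable subset of $[0,1]\setminus\mathscr D$, and its closure $\overline{\mathrm{Fix}\,R}$ is a Cantor set of Lebesgue measure zero with $\overline{\mathrm{Fix}\,R}\setminus\mathrm{Fix}\,R\subset\mathscr D$.
   Context: Define $\rho$ on binary words: for $b=b_1b_2\dots$, $\rho(b)$ is obtained by deleting every digit $b_n=0$ and replacing every $b_n=1$ by $0$ if $n$ is odd and by $1$ if $n$ is even. For $x\in(0,1]$ let $\beta(x)$ be the unique binary expansion of $x$ with infinitely many $1$'s. Define $R:[0,1]\to[0,1]$ by $R(0)=2/3$ and, for $x\in(0,1]$, $R(x)=\sum_{n\ge1}c_n2^{-n}$ where $c=\rho(\beta(x))$. $\mathscr D$ is the set of dyadic rationals in $[0,1]$. *)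

From HB Require Import structures.
From mathcomp Require Import all_boot all_order all_algebra.
From mathcomp Require Import all_classical all_reals all_analysis.
Set Implicit Arguments. Unset Strict Implicit. Unset Printing Implicit Defensive.
Import Order.TTheory GRing.Theory Num.Theory.
Import numFieldNormedType.Exports.
Local Open Scope classical_set_scope.
Local Open Scope ring_scope.

(* Infinite binary words b = b_1 b_2 ... are represented 0-indexed:
   (w : nat -> bool) with w n = b_{n+1}. *)

Definition count_ones (w : nat -> bool) (n : nat) : nat :=
  (\sum_(i < n) (w i : nat))%N.

(* (0-indexed) position of the (k+1)-th digit 1 of w (well defined when w
   has infinitely many 1's; default 0 otherwise) *)
Definition pos_one (w : nat -> bool) (k : nat) : nat :=
  xget 0%N [set n | w n = true /\ count_ones w n = k].

(* rho(w): delete the 0's and replace each 1 at (1-indexed) position m by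
   0 if m is odd and by 1 if m is even.  The k-th (0-indexed) letter of
   rho(w) comes from the 1 at 0-indexed position pos_one w k, i.e. 1-indexed
   position (pos_one w k).+1, which is even iff pos_one w k is odd.
   (For words with infinitely many 1's, rho(w) is again infinite.) *)
Definition rho (w : nat -> bool) : nat -> bool := fun k => odd (pos_one w k).

Definition is_bin_exp {R : realType} (x : R) (w : nat -> bool) : Prop :=
  (fun n => \sum_(k < n) ((w k)%:R / 2 ^+ k.+1 : R)) @ \oo --> x.

Definition infinitely_many_ones (w : nat -> bool) : Prop :=
  forall N, exists2 n, (N <= n)%N & w n = true.

Definition beta {R : realType} (x : R) : nat -> bool :=
  xget (fun _ => false) [set w | is_bin_exp x w /\ infinitely_many_ones w].

Definition bin_val {R : realType} (c : nat -> bool) : R :=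
  limn (fun N => \sum_(n < N) ((c n)%:R / 2 ^+ n.+1 : R)).

Definition Rmap {R : realType} (x : R) : R :=
  if x == 0 then 2 / 3 else bin_val (rho (beta x)).

Definition dyadics {R : realType} : set R :=
  [set x | exists (k n : nat), x = k%:R / 2 ^+ n /\ 0 <= x <= 1].

Definition FixR {R : realType} : set R :=
  [set x | 0 <= x <= 1 /\ Rmap x = x].

Definition cantor_set {T : topologicalType} (A : set T) : Prop :=
  [/\ A !=set0, compact A, perfect_set A & totally_disconnected A].

(* For a word w with infinitely many 1's, the k-th letter of rho(w) is read off
   the parity of the position of the k-th 1 of w; hence rho(w) = w exactly when w
   is self-describing: for each 1 at position j, the letter of w at index
   #{1's before j} is the parity of j.  Since beta inverts bin_val on words with
   infinitely many 1's, Fix R is the image under bin_val of the self-describing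
   words.  Such a word is never eventually 1, so its value is not dyadic.

   A self-describing prefix extends greedily (write a 1 whenever allowed) to a
   self-describing word, and the extension can be forced to write 0 on chosen
   pairs of positions; this makes Fix R perfect and embeds Cantor space in it.
   Conversely, after an admissible prefix the two-letter continuations 01 and 10
   are never both admissible, so at most 3^m of the 4^m prefixes of length 2m are
   admissible, and the closure of Fix R is covered by dyadic intervals of total
   length (3/4)^m: it has measure zero, hence is totally disconnected.  Finally, a
   non-dyadic point of the closure has a unique binary expansion, each prefix of
   which agrees with a point of Fix R; so that expansion is self-describing and the
   point lies in Fix R. *)

From HB Require Import structures.
From mathcomp Require Import all_boot all_order all_algebra.
From mathcomp Require Import all_classical all_reals all_analysis.
From mathcomp Require Import lra zify.
From mathcomp Require Import measurable_realfun.
Import Order.TTheory GRing.Theory Num.Theory.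
Import numFieldNormedType.Exports.
Local Open Scope classical_set_scope.
Local Open Scope ring_scope.

Implicit Types (u v w : nat -> bool).

Section PowersOfHalf.
Variable F : numFieldType.

Lemma exp2N_gt0 n : 0 < (2 ^- n : F).
Proof. by rewrite invr_gt0 exprn_gt0. Qed.

Lemma exp2NS n : (2 ^- n : F) = 2 ^- n.+1 * 2.
Proof. by rewrite exprS invfM mulrAC mulVf ?mul1r. Qed.

Lemma natrS_exp2N k n : k.+1%:R * 2 ^- n = k%:R * 2 ^- n + 2 ^- n :> F.
Proof. by rewrite !mulr_natl mulrSr. Qed.

Lemma exp2N_le {m n} : (m <= n)%N -> (2 ^- n : F) <= 2 ^- m.
Proof. by move=> mn; rewrite lef_pV2 ?posrE ?exprn_gt0 // ler_eXn2l // ltr1n. Qed.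

End PowersOfHalf.

Section ArchimedeanPowersOfHalf.
Variable F : archiRealFieldType.

Lemma exp2N_lt {e : F} : 0 < e -> exists n, 2 ^- n < e.
Proof.
move=> e0; exists (Num.truncn e^-1).
rewrite -natrX invf_plt ?posrE ?ltr0n ?expn_gt0 //.
apply: lt_le_trans (truncnS_gt _) _; rewrite ler_nat; exact: ltn_expl.
Qed.

Lemma eq_of_dist_exp2N {x y : F} N : (forall n, (N <= n)%N -> `|x - y| <= 2 ^- n) ->
  x = y.
Proof.
move=> close; apply/eqP; rewrite -subr_eq0 -normr_eq0; apply: contraT => ne.
have dist_pos : 0 < `|x - y| by rewrite lt_def ne normr_ge0.
have [n xy] := exp2N_lt dist_pos.
have := close _ (leq_addr n N); have := exp2N_le F (leq_addl N n); lra.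
Qed.

End ArchimedeanPowersOfHalf.

Section BinaryExpansions.
Variable R : realType.

Definition bin_psum w n : R := \sum_(k < n) ((w k)%:R / 2 ^+ k.+1).

Lemma bin_psum0 w : bin_psum w 0 = 0.
Proof. by rewrite /bin_psum big_ord0. Qed.

Lemma bin_psumS w n : bin_psum w n.+1 = bin_psum w n + (w n)%:R * 2 ^- n.+1.
Proof. by rewrite /bin_psum big_ord_recr. Qed.

Lemma eq_bin_psum u v n : (forall k, (k < n)%N -> u k = v k) ->
  bin_psum u n = bin_psum v n.
Proof. by move=> uv; apply: eq_bigr => k _; rewrite uv. Qed.

Lemma bin_psum_window w {n m} : (n <= m)%N ->
  bin_psum w n <= bin_psum w m <= bin_psum w n + 2 ^- n - 2 ^- m.
Proof.
elim: m => [|m IH]; first by rewrite leqn0 => /eqP ->; rewrite addrK lexx.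
rewrite leq_eqVlt => /orP [/eqP <-|]; first by rewrite addrK !lexx.
rewrite ltnS => /IH /andP [lo hi]; rewrite bin_psumS.
have := exp2N_gt0 R m.+1; have := exp2NS R m.
by case: (w m) => /=; rewrite ?mul1r ?mul0r; lra.
Qed.

Lemma bin_psum_ge0 w n : 0 <= bin_psum w n.
Proof. by rewrite -(bin_psum0 w); case/andP: (bin_psum_window w (leq0n n)). Qed.

Lemma bin_psum_nondecreasing w : nondecreasing_seq (bin_psum w).
Proof. by move=> n m nm; case/andP: (bin_psum_window w nm). Qed.

Lemma bin_psum_cvg w : cvgn (bin_psum w).
Proof.
apply: nondecreasing_is_cvgn; first exact: bin_psum_nondecreasing.
exists 1 => _ [n _ <-]; have /andP[_] := bin_psum_window w (leq0n n).
by rewrite bin_psum0 expr0 invr1; have := exp2N_gt0 R n; lra.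
Qed.

Lemma bin_valE w : bin_val w = limn (bin_psum w).
Proof. by []. Qed.

Lemma bin_psum_le_val w n : bin_psum w n <= bin_val w.
Proof.
rewrite bin_valE; apply: nondecreasing_cvgn_le.
- exact: bin_psum_nondecreasing.
- exact: bin_psum_cvg.
Qed.

Lemma bin_val_le_psum w n : bin_val w <= bin_psum w n + 2 ^- n.
Proof.
rewrite bin_valE; apply: limr_le; first exact: bin_psum_cvg.
near=> m; have nm : (n <= m)%N by near: m; exact: nbhs_infty_ge.
by have /andP[_] := bin_psum_window w nm; have := exp2N_gt0 R m; lra.
Unshelve. all: by end_near. Qed.

Lemma bin_val_le_psum_zero {w n j} : (n <= j)%N -> w j = false ->
  bin_val w <= bin_psum w n + 2 ^- n - 2 ^- j.+1.
Proof.
move=> nj wj; apply: le_trans (bin_val_le_psum w j.+1) _.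
rewrite bin_psumS wj mul0r addr0; have /andP[_] := bin_psum_window w nj.
by have := exp2NS R j; lra.
Qed.

Lemma bin_psum_one_le_val {w n j} : (n <= j)%N -> w j = true ->
  bin_psum w n + 2 ^- j.+1 <= bin_val w.
Proof.
move=> nj wj; apply: le_trans (bin_psum_le_val w j.+1).
by rewrite bin_psumS wj mul1r lerD2r; case/andP: (bin_psum_window w nj).
Qed.

Lemma bin_val_in01 w : 0 <= (bin_val w : R) <= 1.
Proof.
have := bin_psum_le_val w 0; have := bin_val_le_psum w 0.
by rewrite bin_psum0 expr0 invr1 => ? ?; apply/andP; split; lra.
Qed.

Lemma bin_val_dist_prefix u v n : (forall k, (k < n)%N -> u k = v k) ->
  `|bin_val u - bin_val v| <= (2 ^- n : R).
Proof.
move=> /eq_bin_psum uv; have := bin_psum_le_val u n; have := bin_val_le_psum u n.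
have := bin_psum_le_val v n; have := bin_val_le_psum v n.
by rewrite uv ler_norml => ? ? ? ?; apply/andP; split; lra.
Qed.

Lemma bin_val_false : bin_val (fun=> false) = 0 :> R.
Proof.
rewrite bin_valE (_ : bin_psum _ = fun=> 0) ?lim_cst //.
by apply/funext => n; rewrite /bin_psum big1 // => k _; rewrite mul0r.
Qed.

Lemma is_bin_exp_bin_val w : is_bin_exp (bin_val w : R) w.
Proof. exact: bin_psum_cvg. Qed.

Lemma is_bin_expE (x : R) w : is_bin_exp x w -> x = bin_val w.
Proof. by move=> xw; rewrite /bin_val (cvg_lim _ xw). Qed.

End BinaryExpansions.

Lemma count_ones0 w : count_ones w 0 = 0%N.
Proof. by rewrite /count_ones big_ord0. Qed.

Lemma count_onesS w n : count_ones w n.+1 = (count_ones w n + w n)%N.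
Proof. by rewrite /count_ones big_ord_recr. Qed.

Lemma eq_count_ones {u v n} : (forall k, (k < n)%N -> u k = v k) ->
  count_ones u n = count_ones v n.
Proof. by move=> uv; apply: eq_bigr => k _; rewrite uv. Qed.

Lemma count_ones_mono w {m n} : (m <= n)%N -> (count_ones w m <= count_ones w n)%N.
Proof.
move=> mn; rewrite -(subnKC mn); elim: (n - m)%N => [|k IH]; first by rewrite addn0.
by rewrite addnS count_onesS (leq_trans IH) ?leq_addr.
Qed.

Lemma count_ones_le w n : (count_ones w n <= n)%N.
Proof.
by elim: n => [|n IH]; rewrite ?count_ones0 // count_onesS; case: (w n) => /=; lia.
Qed.

Lemma count_ones_lt {w j n} : (j < n)%N -> w j ->
  (count_ones w j < count_ones w n)%N.
Proof.
move=> jn wj; apply: (@leq_trans (count_ones w j.+1)); last exact: count_ones_mono jn.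
by rewrite count_onesS wj addn1.
Qed.

Lemma count_ones_lt_self {w n} : w 0%N = false -> (0 < n)%N -> (count_ones w n < n)%N.
Proof.
move=> w0; case: n => // n _.
elim: n => [|n IH]; first by rewrite count_onesS count_ones0 w0.
by rewrite count_onesS; move: IH; case: (w _) => /=; lia.
Qed.

Lemma count_ones_unbounded {w} : infinitely_many_ones w ->
  forall k, exists n, (k < count_ones w n)%N.
Proof.
move=> w_inf; elim=> [|k [n kn]].
  by have [n _ wn] := w_inf 0%N; exists n.+1; rewrite count_onesS wn addn1.
have [m nm wm] := w_inf n; exists m.+1; rewrite count_onesS wm.
by have := count_ones_mono w nm; lia.
Qed.

Lemma pos_oneP {w} k : infinitely_many_ones w ->
  w (pos_one w k) = true /\ count_ones w (pos_one w k) = k.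
Proof.
move=> w_inf; rewrite /pos_one.
suff [n nk] : exists n, w n = true /\ count_ones w n = k.
  by case: xgetP => [_ -> //|/(_ n)].
have [N kN minN] := ex_minnP (count_ones_unbounded w_inf k).
case: N kN minN => [|N]; first by rewrite count_ones0.
rewrite count_onesS => kN minN.
have Nk : (count_ones w N <= k)%N by rewrite leqNgt; apply/negP => /minN; rewrite ltnn.
by exists N; move: kN Nk; case: (w N) => /=; lia.
Qed.

Lemma pos_oneE w j : infinitely_many_ones w -> w j = true ->
  pos_one w (count_ones w j) = j.
Proof.
move=> w_inf wj; have [pw pc] := pos_oneP (count_ones w j) w_inf.
case: (ltngtP (pos_one w (count_ones w j)) j) => // ineq.
- by move: (count_ones_lt ineq pw); rewrite pc ltnn.
- by move: (count_ones_lt ineq wj); rewrite pc ltnn.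
Qed.

Lemma first_difference u v : u <> v ->
  exists n, u n <> v n /\ forall k, (k < n)%N -> u k = v k.
Proof.
move=> uv; have [|n /eqP uvn minn] := ex_minnP (_ : exists n, u n != v n).
  apply: contrapT => same; apply: uv; apply/funext => n.
  by apply/eqP; apply: contrapT => /negP neq; apply: same; exists n.
exists n; split => // k kn; apply/eqP; apply: contrapT => /negP /minn.
by rewrite leqNgt kn.
Qed.

Definition self_describing w := forall j, w j -> odd j = w (count_ones w j).

Definition rho_fixed_words : set (nat -> bool) :=
  [set w | infinitely_many_ones w /\ self_describing w].

Lemma rho_fixP {w} : infinitely_many_ones w -> rho w = w <-> self_describing w.
Proof.
move=> w_inf; split => [rw j wj|sd].
  by have := congr1 (fun f => f (count_ones w j)) rw; rewrite /rho pos_oneE.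
apply/funext => k; have [pw pc] := pos_oneP k w_inf.
by rewrite /rho sd // pc.
Qed.

Lemma rho_false : rho (fun=> false) = fun=> false.
Proof. by apply/funext => k; rewrite /rho /pos_one xgetPN // => n []. Qed.

Lemma rho_tail_ones {w n} : infinitely_many_ones w ->
  (forall j, (n < j)%N -> w j = true) -> infinitely_many_ones (rho w).
Proof.
move=> w_inf wn N; set k0 := count_ones w n.+1.
have cnt t : count_ones w (n.+1 + t) = (k0 + t)%N.
  elim: t => [|t IH]; first by rewrite !addn0.
  by rewrite addnS count_onesS IH wn ?addn1 ?addnS // ltnS leq_addr.
have rho_t t : rho w (k0 + t) = odd (n.+1 + t).
  by rewrite /rho -cnt pos_oneE // wn // ltnS leq_addr.
case Ho: (odd (n.+1 + N)); first by exists (k0 + N)%N; rewrite ?leq_addl // rho_t.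
exists (k0 + N.+1)%N; first by rewrite -addSnnS leq_addl.
by rewrite rho_t addnS oddS Ho.
Qed.

Section WordValues.
Variable R : realType.

(* The two binary expansions of a dyadic rational: ...0111... and ...1000... *)
Lemma eq_bin_val_tails {u v n} : u n = false -> v n = true ->
  (forall k, (k < n)%N -> u k = v k) -> bin_val u = bin_val v :> R ->
  (forall j, (n < j)%N -> u j = true) /\ (forall j, (n < j)%N -> v j = false).
Proof.
move=> un vn /(eq_bin_psum R) uv eq_val.
have u_le : bin_val u <= bin_psum R u n + 2 ^- n.+1.
  by have := bin_val_le_psum R u n.+1; rewrite bin_psumS un mul0r addr0.
have v_ge := bin_psum_one_le_val R (leqnn n) vn.
split => j nj.
  case uj: (u j) => //; have := bin_val_le_psum_zero R nj uj.
  by rewrite bin_psumS un mul0r addr0; have := exp2N_gt0 R j.+1; lra.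
case vj: (v j) => //; have := bin_psum_one_le_val R nj vj.
by rewrite bin_psumS vn mul1r; have := exp2N_gt0 R j.+1; lra.
Qed.

Lemma bin_val_inj u v : infinitely_many_ones u -> infinitely_many_ones v ->
  bin_val u = bin_val v :> R -> u = v.
Proof.
move=> u_inf v_inf eq_val; apply: contrapT => /first_difference [n [uvn uv]].
case Eu: (u n); case Ev: (v n); rewrite ?Eu ?Ev in uvn => //.
- have [_ v0] := eq_bin_val_tails Ev Eu (fun k kn => esym (uv k kn)) (esym eq_val).
  by have [j nj] := u_inf n.+1; rewrite v0.
- have [_ v0] := eq_bin_val_tails Eu Ev uv eq_val.
  by have [j nj] := v_inf n.+1; rewrite v0.
Qed.

Lemma bin_val_gt0 {w} : infinitely_many_ones w -> 0 < (bin_val w : R).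
Proof.
move=> w_inf; have [j _ wj] := w_inf 0%N.
have := bin_psum_one_le_val R (leq0n j) wj; rewrite bin_psum0 add0r.
exact/lt_le_trans/exp2N_gt0.
Qed.

Lemma beta_bin_val {w} : infinitely_many_ones w -> beta (bin_val w : R) = w.
Proof.
move=> w_inf; apply: xget_unique; first by split => //; exact: is_bin_exp_bin_val.
by move=> v [/is_bin_expE v_val v_inf]; apply: bin_val_inj.
Qed.

Lemma rho_eq_of_bin_val {w} : infinitely_many_ones w ->
  bin_val (rho w) = bin_val w :> R -> rho w = w.
Proof.
move=> w_inf eq_val; apply: contrapT => /first_difference [n [neq agree]].
case Er: (rho w n); case Ew: (w n); rewrite ?Er ?Ew in neq => //.
- have [w1 r0] := eq_bin_val_tails Ew Er (fun k kn => esym (agree k kn)) (esym eq_val).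
  have [j nj rj] := rho_tail_ones w_inf w1 n.+1.
  by rewrite r0 in rj.
- have [_ w0] := eq_bin_val_tails Er Ew agree eq_val.
  by have [j nj] := w_inf n.+1; rewrite w0.
Qed.

Lemma FixR_bin_val {x : R} : FixR x -> exists2 w, rho_fixed_words w & bin_val w = x.
Proof.
move=> [x01 rx]; have x0 : x != 0.
  by apply/negP => /eqP x0; move: rx; rewrite /Rmap x0 eqxx; lra.
move: rx; rewrite /Rmap (negbTE x0) /beta.
case: xgetP => [w _ [/is_bin_expE xw w_inf]|_]; last first.
  by rewrite rho_false bin_val_false => x0'; rewrite -x0' eqxx in x0.
rewrite xw => /(rho_eq_of_bin_val w_inf) rw.
by exists w; [split => //; apply/rho_fixP|].
Qed.

Lemma bin_val_FixR w : rho_fixed_words w -> FixR (bin_val w : R).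
Proof.
move=> [w_inf sd]; split; first exact: bin_val_in01.
by rewrite /Rmap gt_eqF ?bin_val_gt0 // beta_bin_val // ((rho_fixP w_inf).2 sd).
Qed.

Lemma FixRE : FixR = bin_val @` rho_fixed_words :> set R.
Proof.
apply/seteqP; split => [x /FixR_bin_val [w ? <-]|_ [w ? <-]]; last exact: bin_val_FixR.
by exists w.
Qed.

End WordValues.

Fixpoint prefix_code w n : nat :=
  if n is m.+1 then (2 * prefix_code w m + w m)%N else 0%N.

Lemma prefix_code_lt w n : (prefix_code w n < 2 ^ n)%N.
Proof. by elim: n => [|n IH] //=; rewrite expnS; case: (w n) => /=; lia. Qed.

Lemma prefix_code_inj u v n : prefix_code u n = prefix_code v n ->
  forall k, (k < n)%N -> u k = v k.
Proof.
elim: n => [|n IH] //= eq_code k.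
have [eq_n eq_un] : prefix_code u n = prefix_code v n /\ u n = v n.
  by move: eq_code; case: (u n); case: (v n) => /=; lia.
by rewrite ltnS leq_eqVlt => /orP [/eqP ->|/IH]; [|apply].
Qed.

Section Dyadics.
Variable R : realType.

Lemma bin_psum_prefix_code w n : bin_psum R w n = (prefix_code w n)%:R * 2 ^- n.
Proof.
elim: n => [|n IH]; first by rewrite bin_psum0 mul0r.
rewrite bin_psumS IH /= exp2NS natrD natrM mulrDl.
by case: (w n) => /=; lra.
Qed.

Lemma dyadic_bin_val_tail_ones {w k n} : infinitely_many_ones w ->
  bin_val w = k%:R / 2 ^+ n :> R -> forall i, (n <= i)%N -> w i = true.
Proof.
move=> w_inf val_k; have [j nj wj] := w_inf n.
have lo := bin_psum_one_le_val R nj wj; have hi := bin_val_le_psum R w n.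
have en := exp2N_gt0 R n; have ej := exp2N_gt0 R j.+1.
rewrite bin_psum_prefix_code val_k in lo hi.
have k_code : k = (prefix_code w n).+1.
  apply/eqP; rewrite eqn_leq -(ler_nat R) -(ler_pM2r en) -(ltr_nat R) -(ltr_pM2r en).
  by rewrite natrS_exp2N; apply/andP; split; lra.
move=> i ni; case wi: (w i) => //; have := bin_val_le_psum_zero R ni wi.
by rewrite bin_psum_prefix_code val_k k_code natrS_exp2N; have := exp2N_gt0 R i.+1; lra.
Qed.

End Dyadics.

Lemma self_describing_not_tail_ones {w} n : infinitely_many_ones w ->
  self_describing w -> ~ (forall i, (n <= i)%N -> w i = true).
Proof.
move=> w_inf sd ones; have [m nm] := count_ones_unbounded w_inf n.
have mn : (n < m)%N by apply: leq_trans nm (count_ones_le _ _).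
have wm := ones m (ltnW mn); have wm1 := ones m.+1 (leqW (ltnW mn)).
have := sd m wm; have := sd m.+1 wm1.
rewrite count_onesS wm addn1 !ones ?(ltnW nm) ?(leqW (ltnW nm)) //.
by rewrite oddS => /negbTE ->.
Qed.

Lemma rho_fixed_words_not_dyadic (R : realType) w : rho_fixed_words w ->
  ~ dyadics (bin_val w : R).
Proof.
move=> [w_inf sd] [k [n [val_k _]]].
exact: (self_describing_not_tail_ones _ w_inf sd
  (dyadic_bin_val_tail_ones R w_inf val_k)).
Qed.

Definition self_describing_upto u n :=
  forall j, (j < n)%N -> u j -> odd j = u (count_ones u j).

Lemma self_describing_head {w} : self_describing w -> w 0%N = false.
Proof.
by move=> sd; case w0: (w 0%N) => //; move: (sd 0%N w0); rewrite count_ones0 w0.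
Qed.

(* [greedy u n skip] keeps the first [n] letters of [u]; at a later position [j]
   it writes 0 if [skip j], and otherwise writes 1 exactly when self-description
   allows it.  The letter referred to, at [count_ones _ j < j], is already fixed. *)
Fixpoint greedy_prefix u n (skip : nat -> bool) j : nat -> bool :=
  if j is i.+1 then
    let g := greedy_prefix u n skip i in
    fun k => if k == i then
      (if (i < n)%N then u i else ~~ skip i && (odd i == g (count_ones g i)))
    else g k
  else u.

Definition greedy u n skip j : bool := greedy_prefix u n skip j.+1 j.

Lemma greedy_prefixE u n skip i j : (i < j)%N ->
  greedy_prefix u n skip j i = greedy u n skip i.
Proof.
move=> ij; rewrite /greedy -(subnKC ij).
elim: (j - i.+1)%N => [|k IH]; first by rewrite addn0.
by rewrite addnS /= ifF ?IH // ltn_eqF // leq_addr.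
Qed.

Lemma greedy_lt u n skip j : (j < n)%N -> greedy u n skip j = u j.
Proof. by move=> jn; rewrite /greedy /= eqxx jn. Qed.

Lemma greedy_ge u n skip j : (n <= j)%N -> (count_ones (greedy u n skip) j < j)%N ->
  greedy u n skip j =
    ~~ skip j && (odd j == greedy u n skip (count_ones (greedy u n skip) j)).
Proof.
move=> nj cj; rewrite {1}/greedy /= eqxx ltnNge nj /=.
have -> : count_ones (greedy_prefix u n skip j) j = count_ones (greedy u n skip) j.
  by apply: eq_count_ones => k kj; rewrite greedy_prefixE.
by rewrite greedy_prefixE.
Qed.

Section Greedy.
Variables (u : nat -> bool) (n : nat) (skip : nat -> bool).
Hypotheses (n_gt0 : (0 < n)%N) (u0 : u 0%N = false) (sd_u : self_describing_upto u n).
Let g := greedy u n skip.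

Lemma greedy0 : g 0%N = false.
Proof. by rewrite /g greedy_lt. Qed.

Lemma greedy_count_lt j : (0 < j)%N -> (count_ones g j < j)%N.
Proof. by apply: count_ones_lt_self; exact: greedy0. Qed.

Lemma greedy_self_describing : self_describing g.
Proof.
move=> j gj; case: (ltnP j n) => jn.
  have gu k : (k < n)%N -> g k = u k by move=> kn; rewrite /g greedy_lt.
  have cnt : count_ones g j = count_ones u j.
    by apply: eq_count_ones => k kj; apply/gu/(ltn_trans kj).
  rewrite cnt gu ?(leq_ltn_trans (count_ones_le _ _) jn) //.
  by apply: sd_u => //; rewrite -gu.
have j_gt0 : (0 < j)%N by exact: leq_trans n_gt0 jn.
by move: gj; rewrite /g greedy_ge ?greedy_count_lt // => /andP [_ /eqP].
Qed.

(* Two consecutive non-skipped positions cannot both receive a 0: the second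
   one refers to the same letter as the first, with the opposite parity. *)
Lemma greedy_pair {j} : (n <= j)%N -> skip j = false -> skip j.+1 = false ->
  g j || g j.+1.
Proof.
move=> nj skj skj1; have j_gt0 : (0 < j)%N by exact: leq_trans n_gt0 nj.
case gj: (g j) => //=.
have cnt : count_ones g j.+1 = count_ones g j by rewrite count_onesS gj addn0.
move: gj; rewrite /g (greedy_ge u n skip j) ?greedy_count_lt // skj /=.
rewrite (greedy_ge u n skip j.+1) ?greedy_count_lt ?(leqW nj) // skj1 /= -/g cnt.
by case: (odd j); case: (g _).
Qed.

Lemma greedy_rho_fixed :
  (forall N, exists2 j, (N <= j)%N & skip j = false /\ skip j.+1 = false) ->
  rho_fixed_words g.
Proof.
move=> free; split; last exact: greedy_self_describing.
move=> N; have [j Nnj [skj skj1]] := free (maxn N n).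
have nj : (n <= j)%N by exact: leq_trans (leq_maxr _ _) Nnj.
have Nj : (N <= j)%N by exact: leq_trans (leq_maxl _ _) Nnj.
by case/orP: (greedy_pair nj skj skj1) => gj; [exists j|exists j.+1; rewrite ?leqW].
Qed.

End Greedy.

Lemma rho_fixed_words_perfect {w} N : rho_fixed_words w ->
  exists2 v, rho_fixed_words v & v <> w /\ forall k, (k < N)%N -> v k = w k.
Proof.
move=> [w_inf sd]; have w0 := self_describing_head sd.
have sd_w n : self_describing_upto w n by move=> j _; exact: sd.
pose g1 := greedy w N.+1 (fun=> false).
pose g2 := greedy w N.+1 (fun j => (j < N.+3)%N).
have g1_fixed : rho_fixed_words g1 by apply: greedy_rho_fixed => // M; exists M.
have g2_fixed : rho_fixed_words g2.
  apply: greedy_rho_fixed => // M; exists (M + N.+3)%N; first exact: leq_addr.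
  by split; apply/negbTE; rewrite -leqNgt; lia.
have g1_pair : g1 N.+1 || g1 N.+2 by apply: greedy_pair.
have [g2N1 g2N2] : g2 N.+1 = false /\ g2 N.+2 = false.
  by split; rewrite /g2 greedy_ge ?greedy_count_lt ?leqnSn ?ltnSn.
have agree skip k : (k < N)%N -> greedy w N.+1 skip k = w k.
  by move=> kN; rewrite greedy_lt // ltnS ltnW.
have [g1w|g1w] := pselect (g1 = w); last by exists g1 => //; split => // k; apply: agree.
exists g2 => //; split => [g2w|k]; last apply: agree.
by move: g1_pair; rewrite g1w -g2w g2N1 g2N2.
Qed.

Definition cantor_skip (s : nat -> bool) j : bool :=
  ((j %% 4 == 1) || (j %% 4 == 2))%N && s (j %/ 4)%N.

Definition cantor_word s := greedy (fun=> false) 1 (cantor_skip s).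

Lemma cantor_word_rho_fixed s : rho_fixed_words (cantor_word s).
Proof.
apply: greedy_rho_fixed => // N; exists (4 * N + 3)%N; rewrite /cantor_skip; first lia.
have -> : ((4 * N + 3) %% 4 = 3)%N by lia.
by have -> : ((4 * N + 3).+1 %% 4 = 0)%N by lia.
Qed.

Lemma cantor_word_inj : injective cantor_word.
Proof.
move=> s s' eq_word; apply/funext => m; apply/eqP; apply: contrapT => /negP neq.
wlog sm : s s' eq_word neq / s m = true.
  move=> H; case sm: (s m); first exact: (H s s').
  by apply: (H s' s) => //; move: neq; rewrite sm; case: (s' m).
have s'm : s' m = false by move: neq; rewrite sm; case: (s' m).
have mod1 : ((4 * m + 1) %% 4 = 1)%N by lia.
have div1 : ((4 * m + 1) %/ 4 = m)%N by lia.
have mod2 : ((4 * m + 1).+1 %% 4 = 2)%N by lia.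
have div2 : ((4 * m + 1).+1 %/ 4 = m)%N by lia.
have zero j : (0 < j)%N -> cantor_skip s j -> cantor_word s j = false.
  by move=> j_gt0 skj; rewrite /cantor_word greedy_ge ?skj ?greedy_count_lt.
have := @greedy_pair (fun=> false) 1 (cantor_skip s') isT erefl (4 * m + 1)%N.
have pos : (0 < 4 * m + 1)%N by lia.
rewrite -/(cantor_word s') -eq_word !zero /cantor_skip ?mod1 ?div1 ?mod2 ?div2 ?sm //.
by rewrite s'm andbF => /(_ pos erefl erefl).
Qed.

Lemma prefix_codeSS u n :
  prefix_code u n.+2 = (4 * prefix_code u n + 2 * u n + u n.+1)%N.
Proof. by rewrite /=; lia. Qed.

Lemma self_describing_upto_le {u m n} : (m <= n)%N ->
  self_describing_upto u n -> self_describing_upto u m.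
Proof. by move=> mn sd j jm; apply/sd/(leq_trans jm). Qed.

(* After an admissible prefix, 01 and 10 cannot both be admissible: both
   letters at positions [n] and [n+1] refer to the same earlier letter. *)
Lemma self_describing_upto_01_10 {u v n} :
  self_describing_upto u n.+2 -> self_describing_upto v n.+2 ->
  (forall k, (k < n)%N -> u k = v k) -> u n = false -> u n.+1 = true ->
  v n = true -> False.
Proof.
move=> sd_u sd_v uv un un1 vn.
have u0 : u 0%N = false.
  by case u0: (u 0%N) => //; move: (sd_u 0%N isT u0); rewrite count_ones0 u0.
case: n => [|n] in uv un un1 vn sd_u sd_v *.
  by move: (sd_v 0%N isT vn); rewrite count_ones0 vn.
have c_lt := count_ones_lt_self u0 (ltn0Sn n).
have := sd_v n.+1 (leqW (ltnSn _)) vn; rewrite -(eq_count_ones uv) -uv //.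
have := sd_u n.+2 (ltnSn _) un1; rewrite count_onesS un addn0 /=.
by rewrite negbK => <-; case: (odd n).
Qed.

Definition admissible n k : bool :=
  `[< exists u, self_describing_upto u n /\ prefix_code u n = k >].

Definition num_admissible n : nat := (\sum_(0 <= k < 2 ^ n) admissible n k)%N.

Lemma admissible_prefix {n k r} : (r < 4)%N -> admissible n.+2 (4 * k + r) ->
  admissible n k.
Proof.
move=> r4 /asboolP [u [sd code]]; apply/asboolP; exists u; split.
  exact: self_describing_upto_le (leqW (leqnSn n)) sd.
by move: code; rewrite prefix_codeSS; move: (leq_b1 (u n)) (leq_b1 (u n.+1)); lia.
Qed.

Lemma admissible_01_10 n k :
  admissible n.+2 (4 * k + 1) -> admissible n.+2 (4 * k + 2) -> False.
Proof.
move=> /asboolP [u [sd_u]] /[swap] /asboolP [v [sd_v]].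
rewrite !prefix_codeSS => code_v code_u.
have [cu un un1] : [/\ prefix_code u n = k, u n = false & u n.+1 = true].
  by move: code_u; case: (u n); case: (u n.+1) => /= code; split => //; lia.
have [cv vn] : prefix_code v n = k /\ v n = true.
  by move: code_v; case: (v n); case: (v n.+1) => /= code; split => //; lia.
apply: (self_describing_upto_01_10 sd_u sd_v _ un un1 vn).
by apply: prefix_code_inj; rewrite cu cv.
Qed.

Lemma admissible_children n k :
  (admissible n.+2 (4 * k) + admissible n.+2 (4 * k + 1) +
   admissible n.+2 (4 * k + 2) + admissible n.+2 (4 * k + 3) <= 3 * admissible n k)%N.
Proof.
have excl := @admissible_01_10 n k.
case: (boolP (admissible n k)) => [_|/negP nadm].
  move: excl; case: (admissible _ (_ + 1)); case: (admissible _ (_ + 2)) => excl;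
    first (by exfalso; apply: excl);
  by case: (admissible _ (4 * k)); case: (admissible _ (_ + 3)).
have no_child r : (r < 4)%N -> admissible n.+2 (4 * k + r) = false.
  by move=> r4; apply/negP => /(admissible_prefix r4).
by rewrite -{1}[(4 * k)%N]addn0 !no_child.
Qed.

Lemma sum_nat_blocks4 (f : nat -> nat) N :
  (\sum_(0 <= i < 4 * N) f i =
   \sum_(0 <= k < N) (f (4 * k) + f (4 * k + 1) + f (4 * k + 2) + f (4 * k + 3)))%N.
Proof.
elim: N => [|N IH]; first by rewrite muln0 !big_geq.
rewrite [RHS]big_nat_recr //= -IH (_ : 4 * N.+1 = (4 * N).+4)%N; last by lia.
by do 4! rewrite big_nat_recr //=; rewrite !addn1 !addn2 !addn3 !addnA.
Qed.

Lemma num_admissibleSS n : (num_admissible n.+2 <= 3 * num_admissible n)%N.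
Proof.
rewrite /num_admissible !expnS mulnA -/(4) sum_nat_blocks4 big_distrr /=.
by apply: leq_sum => k _; exact: admissible_children.
Qed.

Lemma num_admissible_double m : (num_admissible (2 * m) <= 3 ^ m)%N.
Proof.
elim: m => [|m IH]; first by rewrite /num_admissible muln0 big_nat1; case: admissible.
rewrite (_ : 2 * m.+1 = (2 * m).+2)%N; last by lia.
by apply: leq_trans (num_admissibleSS _) _; rewrite expnS leq_mul2l IH orbT.
Qed.

(* [(3/4)^(3N) <= 2^-N] since [27 <= 32] *)
Lemma num_admissible_small N : (num_admissible (6 * N) * 2 ^ N <= 2 ^ (6 * N))%N.
Proof.
rewrite (_ : 6 * N = 2 * (3 * N))%N; last by lia.
apply: leq_trans (leq_mul (num_admissible_double _) (leqnn _)) _.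
rewrite mulnA !expnM -expnMn.
by case: N => [|N]; rewrite ?expn0 // leq_exp2r.
Qed.

Section Measure.
Variable R : realType.

Definition admissible_itv n k : set R :=
  if admissible n k then `[k%:R * 2 ^- n, k.+1%:R * 2 ^- n]%classic else set0.

Lemma admissible_itv_closed n k : closed (admissible_itv n k).
Proof.
by rewrite /admissible_itv; case: admissible; [exact: interval_closed|exact: closed0].
Qed.

Lemma admissible_itv_measurable n k : measurable (admissible_itv n k).
Proof. by rewrite /admissible_itv; case: admissible. Qed.

Lemma lebesgue_admissible_itv n k :
  lebesgue_measure (admissible_itv n k) = ((admissible n k)%:R * 2 ^- n)%:E.
Proof.
rewrite /admissible_itv; case: admissible => /=; last by rewrite measure0 mul0r.
rewrite lebesgue_measure_itv /= ifT; last by rewrite lte_fin ltr_pM2r ?exp2N_gt0 ?ltr_nat.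
by rewrite -EFinB -mulrBl -natrB // subSnn.
Qed.

Lemma FixR_sub_admissible_itv n :
  @FixR R `<=` \big[setU/set0]_(k < 2 ^ n) admissible_itv n k.
Proof.
rewrite FixRE => _ [w [w_inf sd] <-]; rewrite -bigcup_mkord.
exists (prefix_code w n); first exact: prefix_code_lt.
rewrite /admissible_itv ifT; last by apply/asboolP; exists w; split => // j _; exact: sd.
rewrite /= in_itv /= natrS_exp2N -bin_psum_prefix_code.
by rewrite bin_psum_le_val bin_val_le_psum.
Qed.

Lemma closure_FixR_sub_admissible_itv n :
  closure (@FixR R) `<=` \big[setU/set0]_(k < 2 ^ n) admissible_itv n k.
Proof.
rewrite [X in _ `<=` X](closure_id _).1; first exact/closureS/FixR_sub_admissible_itv.
by apply: closed_bigsetU => k _; exact: admissible_itv_closed.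
Qed.

Lemma closure_FixR_measurable : measurable (closure (@FixR R)).
Proof. by apply: closed_measurable; exact: closed_closure. Qed.

Lemma lebesgue_closure_FixR_le n :
  (lebesgue_measure (closure (@FixR R)) <= ((num_admissible n)%:R * 2 ^- n)%:E)%E.
Proof.
have itv_measurable k : `I_(2 ^ n) k -> measurable (admissible_itv n k).
  by move=> _; exact: admissible_itv_measurable.
apply: le_trans (content_subadditive (@lebesgue_measure R) itv_measurable
  closure_FixR_measurable (closure_FixR_sub_admissible_itv n)) _.
rewrite (eq_bigr (fun k : 'I_(2 ^ n) => ((admissible n k)%:R * 2 ^- n)%:E)); last first.
  by move=> k _; exact: lebesgue_admissible_itv.
by rewrite sumEFin lee_fin /num_admissible -big_distrl /= natr_sum big_mkord.
Qed.

Lemma lebesgue_closure_FixR : lebesgue_measure (closure (@FixR R)) = 0%E.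
Proof.
apply/eqP; rewrite eq_le measure_ge0 andbT; apply/lee_addgt0Pr => e e0.
rewrite add0e; have [N eN] := exp2N_lt R e0.
apply: le_trans (lebesgue_closure_FixR_le (6 * N)) _; rewrite lee_fin.
apply: le_trans (ltW eN); rewrite -!natrX.
rewrite ler_pdivrMr ?ltr0n ?expn_gt0 // mulrC ler_pdivlMr ?ltr0n ?expn_gt0 //.
by rewrite -natrM ler_nat num_admissible_small.
Qed.

End Measure.

Lemma not_injective_cantor_nat (h : (nat -> bool) -> nat) : ~ injective h.
Proof.
move=> h_inj; pose G n := xget (fun=> false) [set s | h s = n].
pose d n := ~~ G n n.
have Gd : G (h d) = d.
  by apply: h_inj; exact: (xgetPex (fun=> false) (ex_intro _ d erefl : exists s, h s = h d)).
by have := congr1 (fun s => s (h d)) Gd; rewrite /d; case: (G _ _).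
Qed.

Section Topology.
Variable R : realType.

Lemma FixR_sub01 : @FixR R `<=` `[0, 1]%classic.
Proof. by move=> x [x01 _]; rewrite /= in_itv. Qed.

Lemma closure_FixR_sub01 : closure (@FixR R) `<=` `[0, 1]%classic.
Proof.
rewrite [X in _ `<=` X](closure_id _).1; first exact/closureS/FixR_sub01.
exact: interval_closed.
Qed.

Lemma FixR_uncountable : ~ countable (@FixR R).
Proof.
move/countable_injP => [f f_inj].
apply: (not_injective_cantor_nat (fun s => f (bin_val (cantor_word s)))) => s s' eq_f.
have FixR_cw t : (bin_val (cantor_word t) : R) \in FixR.
  by rewrite inE FixRE; exists (cantor_word t) => //; exact: cantor_word_rho_fixed.
apply: cantor_word_inj; apply: (bin_val_inj R).
- exact: (cantor_word_rho_fixed s).1.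
- exact: (cantor_word_rho_fixed s').1.
- exact: f_inj (FixR_cw s) (FixR_cw s') eq_f.
Qed.

Lemma FixR_limit_point {x} : @FixR R x -> limit_point (@FixR R) x.
Proof.
rewrite FixRE => -[w w_fixed <-] U /nbhs_ballP [e e0 ballU].
have [N eN] := exp2N_lt R e0.
have [v v_fixed [vw agree]] := rho_fixed_words_perfect N w_fixed.
exists (bin_val v); split.
- apply/eqP => /(bin_val_inj R) eq_vw.
  by apply/vw/eq_vw; [exact: v_fixed.1|exact: w_fixed.1].
- by exists v.
- apply/ballU; rewrite -ball_normE /=; apply: le_lt_trans eN.
  by apply: bin_val_dist_prefix => k kN; rewrite agree.
Qed.

Lemma closure_FixR_perfect : perfect_set (closure (@FixR R)).
Proof.
split; first exact: closed_closure.
apply/seteqP; split.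
  rewrite [X in _ `<=` X](closure_id _).1; last exact: closed_closure.
  by move=> x lim_x B /lim_x [y [_ Ey By]]; exists y.
move=> x cl_x U xU; have [a [Fa Ua]] := cl_x U xU.
have [ax|ax] := pselect (a = x).
  subst a; have [y [yx Fy Uy]] := FixR_limit_point Fa U xU.
  by exists y; split => //; exact: subset_closure.
by exists a; split => //; [apply/eqP|exact: subset_closure].
Qed.

Lemma closure_FixR_compact : compact (closure (@FixR R)).
Proof.
apply: (@subclosed_compact _ _ `[(0 : R), 1]%classic).
- exact: closed_closure.
- exact: segment_compact.
- exact: closure_FixR_sub01.
Qed.

Lemma closure_FixR_totally_disconnected : totally_disconnected (closure (@FixR R)).
Proof.
move=> x cl_x; apply/seteqP; split; last first.
  by move=> y -> /=; exists [set x] => //; split => //; [move=> z ->|exact: connected1].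
move=> y [B [Bx B_sub B_conn] By] /=; apply: contrapT => yx.
have B_itv := (connected_intervalP B).1 B_conn.
(* A nontrivial interval in [closure FixR] would have positive measure. *)
suff no_itv a c : a < c -> B a -> B c -> False.
  by case: (ltgtP x y) => [/no_itv|/no_itv|xy]; [apply|apply|apply: yx].
move=> ac Ba Bc; have sub : `[a, c]%classic `<=` closure (@FixR R).
  by move=> z; rewrite /= in_itv /= => zac; apply/B_sub/(B_itv _ _ Ba Bc).
have itv_m : `[a, c]%classic \in (measurable : set (set R)).
  by rewrite inE; exact: measurable_itv.
have cl_m : closure (@FixR R) \in (measurable : set (set R)).
  by rewrite inE; exact: closure_FixR_measurable.
have : (lebesgue_measure `[a, c]%classic <= lebesgue_measure (closure (@FixR R)))%E.
  exact: (@le_measure _ _ _ (@lebesgue_measure R) _ _ itv_m cl_m sub).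
by rewrite lebesgue_closure_FixR lebesgue_measure_itv /= lte_fin ac lee_fin; lra.
Qed.

End Topology.

Section DyadicClosurePoints.
Variable R : realType.
Implicit Types x y : R.

Fixpoint bin_trunc x n : R :=
  if n is m.+1 then
    if bin_trunc x m + 2 ^- m.+1 <= x then bin_trunc x m + 2 ^- m.+1 else bin_trunc x m
  else 0.

Definition bin_digit x n : bool := bin_trunc x n + 2 ^- n.+1 <= x.

Lemma bin_psum_digit x n : bin_psum R (bin_digit x) n = bin_trunc x n.
Proof.
elim: n => [|n IH]; first by rewrite bin_psum0.
by rewrite bin_psumS IH /= /bin_digit; case: ifP; rewrite ?mul1r ?mul0r ?addr0.
Qed.

Lemma bin_trunc_bounds {x} n : 0 <= x < 1 -> bin_trunc x n <= x < bin_trunc x n + 2 ^- n.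
Proof.
move=> /andP [x0 x1]; elim: n => [|n IH]; first by rewrite /= expr0 invr1 add0r x0 x1.
have := exp2NS R n; case/andP: IH => lo hi /=.
by case: ifP => [|/negbT]; rewrite -?ltNge => ? ?; apply/andP; split; lra.
Qed.

Lemma scaled_floor_unique {p q : nat} {y e : R} : 0 < e ->
  p%:R * e < y < p.+1%:R * e -> q%:R * e <= y <= q.+1%:R * e -> p = q.
Proof.
move=> e0 /andP [p_lo p_hi] /andP [q_lo q_hi].
apply/eqP; rewrite eqn_leq; apply/andP; split; rewrite -ltnS -(ltr_nat R) -(ltr_pM2r e0).
- exact: lt_le_trans p_lo q_hi.
- exact: le_lt_trans q_lo p_hi.
Qed.

Lemma nondyadic_bin_digit {x} : 0 <= x < 1 -> ~ dyadics x ->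
  [/\ infinitely_many_ones (bin_digit x), x = bin_val (bin_digit x)
    & forall n, bin_psum R (bin_digit x) n < x < bin_psum R (bin_digit x) n + 2 ^- n].
Proof.
move=> x01 ndy; have bounds n := bin_trunc_bounds n x01.
have trunc_dyadic n : dyadics (bin_trunc x n).
  exists (prefix_code (bin_digit x) n), n; split.
    by rewrite -bin_psum_prefix_code bin_psum_digit.
  have /andP[lo _] := bounds n; rewrite -bin_psum_digit in lo *.
  by rewrite bin_psum_ge0 (le_trans lo) //; case/andP: x01 => _ /ltW.
have trunc_lt n : bin_trunc x n < x.
  have /andP[lo _] := bounds n; rewrite lt_neqAle lo andbT.
  by apply/eqP => eqx; apply/ndy; rewrite -eqx.
have itv n : bin_psum R (bin_digit x) n < x < bin_psum R (bin_digit x) n + 2 ^- n.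
  by rewrite bin_psum_digit trunc_lt; case/andP: (bounds n).
split => //.
- move=> N; apply: contrapT => no_one.
  have trunc_const t : bin_trunc x (N + t) = bin_trunc x N.
    elim: t => [|t IH]; first by rewrite addn0.
    rewrite addnS /= -/(bin_digit x (N + t)) IH ifF //.
    by apply/negbTE/negP => dN; apply: no_one; exists (N + t)%N; rewrite ?leq_addr.
  apply/ndy; rewrite (_ : x = bin_trunc x N) //; apply: (eq_of_dist_exp2N R N) => n Nn.
  have /andP[lo hi] := bounds n; rewrite -(subnKC Nn) trunc_const in lo hi.
  by rewrite ger0_norm ?subr_ge0 // -(subnKC Nn); lra.
- apply: (eq_of_dist_exp2N R 0) => n _; have := bin_psum_le_val R (bin_digit x) n.
  have := bin_val_le_psum R (bin_digit x) n; have /andP[lo hi] := itv n.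
  by rewrite ler_norml => ? ?; apply/andP; split; lra.
Qed.

Lemma closure_FixR_prefix {x d n} : closure (@FixR R) x ->
  bin_psum R d n < x < bin_psum R d n + 2 ^- n ->
  exists2 v, rho_fixed_words v & forall k, (k < n)%N -> v k = d k.
Proof.
move=> cl_x /andP [lo hi].
have itv_x : nbhs x `](bin_psum R d n), (bin_psum R d n + 2 ^- n)[%classic.
  by apply: open_nbhs_nbhs; split; [exact: itv_open|rewrite /= in_itv /= lo hi].
have [_ [/FixR_bin_val [v v_fixed <-]]] := cl_x _ itv_x.
rewrite /= in_itv /= => v_itv; exists v => //; apply: prefix_code_inj.
apply/esym/(@scaled_floor_unique _ _ (bin_val v) _ (exp2N_gt0 R n)).
  by rewrite natrS_exp2N -bin_psum_prefix_code.
by rewrite natrS_exp2N -bin_psum_prefix_code bin_psum_le_val bin_val_le_psum.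
Qed.

Lemma self_describing_of_prefixes d :
  (forall n, exists2 v, self_describing v & forall k, (k < n)%N -> v k = d k) ->
  self_describing d.
Proof.
move=> prefixes j dj; have [v sd_v agree] := prefixes j.+1.
have cnt : count_ones d j = count_ones v j.
  by apply: eq_count_ones => k kj; rewrite agree // ltnW.
have cnt_lt : (count_ones v j < j.+1)%N by rewrite ltnS count_ones_le.
by rewrite cnt -agree ?sd_v ?agree.
Qed.

Lemma closure_FixR_dyadic x : closure (@FixR R) x -> ~ FixR x -> dyadics x.
Proof.
move=> cl_x nFx; apply: contrapT => ndy.
have := closure_FixR_sub01 R x cl_x; rewrite /= in_itv /= => /andP [x0 x1].
have x01 : 0 <= x < 1.
  rewrite x0 lt_neqAle x1 andbT; apply/eqP => x_1; apply: ndy.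
  by exists 1%N, 0%N; rewrite x_1 expr0 divr1 ler01 lexx.
have [d_inf x_val d_itv] := nondyadic_bin_digit x01 ndy.
apply/nFx; rewrite x_val FixRE; exists (bin_digit x) => //; split => //.
apply: self_describing_of_prefixes => n.
by have [v [_ sd_v] agree] := closure_FixR_prefix cl_x (d_itv n); exists v.
Qed.

End DyadicClosurePoints.

Theorem proposition6p6 (R : realType) :
  [/\ ~ countable (@FixR R),
      @FixR R `<=` `[0, 1]%classic `\` @dyadics R,
      cantor_set (closure (@FixR R)),
      (lebesgue_measure (closure (@FixR R)) = 0)%E
    & closure (@FixR R) `\` @FixR R `<=` @dyadics R].
Proof.
split.
- exact: FixR_uncountable.
- move=> x Fx; split; first exact: FixR_sub01.
  by have [w w_fixed <-] := FixR_bin_val R Fx; exact: rho_fixed_words_not_dyadic.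
- split.
  + exists (bin_val (cantor_word (fun=> false))); apply/subset_closure/bin_val_FixR.
    exact: cantor_word_rho_fixed.
  + exact: closure_FixR_compact.
  + exact: closure_FixR_perfect.
  + exact: closure_FixR_totally_disconnected.
- exact: lebesgue_closure_FixR.
- by move=> x [cl_x nFx]; exact: closure_FixR_dyadic.
Qed.
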